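(* For every nonnegative integer $n$, the number of permutations in $\mathfrak S_n$ that avoid each of the classical patterns $132$, $3214$ and $4213$ is $|\mathrm{Av}_n(132,3214,4213)|=2^n-n$.
   Context: $\mathfrak S_n$ is the set of permutations of $\{1,\dots,n\}$ (with $\mathfrak S_0$ consisting of the empty permutation). A permutation $\tau$ contains a classical pattern $\sigma\in\mathfrak S_k$ if it has a subsequence $\tau_{i_1}\cdots\tau_{i_k}$ ($i_1<\dots<i_k$) with the same relative order as $\sigma$; otherwise it avoids $\sigma$. $\mathrm{Av}_n(\dots)$ denotes the set of permutations in $\mathfrak S_n$ avoiding all listed patterns. *)

From mathcomp Require Import all_boot all_fingroup.
Set Implicit Arguments. Unset Strict Implicit. Unset Printing Implicit Defensive.

(* A classical pattern is given in one-line notation as a sequence of naturals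
   (e.g. [:: 1; 3; 2] for 132); only relative order of entries matters.
   tau : 'S_n (permutation of {0,..,n-1}) contains p iff there are indices
   i_1 < ... < i_k (a strictly increasing map f : 'I_k -> 'I_n) such that
   tau(i_a) < tau(i_b) <-> p_a < p_b for all a, b. *)
Definition contains_pattern (n : nat) (tau : 'S_n) (p : seq nat) : bool :=
  [exists f : {ffun 'I_(size p) -> 'I_n},
    [forall a : 'I_(size p), forall b : 'I_(size p),
      ((a < b) ==> (f a < f b)) &&
      ((tau (f a) < tau (f b)) == (nth 0 p a < nth 0 p b))]].

Definition avoids_pattern (n : nat) (tau : 'S_n) (p : seq nat) : bool :=
  ~~ contains_pattern tau p.

Definition Av (n : nat) (ps : seq (seq nat)) : {set 'S_n} :=
  [set tau : 'S_n | all (avoids_pattern tau) ps].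

From mathcomp Require Import all_boot all_fingroup zify.
Set Implicit Arguments. Unset Strict Implicit. Unset Printing Implicit Defensive.

(* A word avoiding 132 has all entries left of its maximum above all entries
   right of it, so a permutation word of {0, ..., m} avoiding 132 is
   L ++ m :: R with R a word of {0, ..., r-1} and L one of {r, ..., m-1}.  It
   then avoids 3214 and 4213 exactly when L avoids 132 and 321 and R avoids
   132 and 213.  Splitting these two classes at their maxima in the same way
   shows that there are 1 + C(k, 2) words of length k of the first kind (the
   maximum is last, or both sides are increasing runs) and 2^(r-1) of the
   second (L is an increasing run), and
   sum_(r <= m) (1 + C(m - r, 2)) 2^(r-1) = 2^(m+1) - (m+1), reading 2^(r-1)
   as 1 for r = 0. *)

Section Occurrences.
Variable T : eqType.

Fixpoint subseqs (s : seq T) : seq (seq T) :=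
  if s is x :: s' then [seq x :: u | u <- subseqs s'] ++ subseqs s' else [:: [::]].

Lemma mem_subseqs u s : (u \in subseqs s) = subseq u s.
Proof.
elim: s u => [|x s IHs] [|y u] //=; rewrite mem_cat IHs ?sub0seq ?orbT //.
have -> : (y :: u \in [seq x :: v | v <- subseqs s]) = (y == x) && subseq u s.
  by rewrite -IHs; apply/mapP/andP => [[v v_s [-> ->]] | [/eqP -> u_s]]; [|exists u].
by case: eqP => [-> | _] //=; apply/orP/idP => [[|/cons_subseq] | ->]; auto.
Qed.

Definition occurs (pat : pred (seq T)) (s : seq T) : bool := has pat (subseqs s).

Lemma occursP (pat : pred (seq T)) s :
  reflect (exists2 u, subseq u s & pat u) (occurs pat s).
Proof.
by apply: (iffP hasP) => -[u]; [rewrite mem_subseqs | rewrite -mem_subseqs]; exists u.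
Qed.

Lemma occurs_subseq (pat : pred (seq T)) s1 s2 :
  subseq s1 s2 -> occurs pat s1 -> occurs pat s2.
Proof.
move=> s12 /occursP[u u_s1 pat_u]; apply/occursP; exists u => //.
exact: subseq_trans s12.
Qed.

Lemma subseq_all (a : pred T) u s : subseq u s -> all a s -> all a u.
Proof. by case/subseqP=> m _ ->; apply: all_mask. Qed.

Lemma pivot_suffix_subseq (L R : seq T) x : subseq R (L ++ x :: R).
Proof. exact: subseq_trans (subseq_cons R x) (suffix_subseq L _). Qed.

Lemma subseq_pivot (u L R : seq T) x : subseq u (L ++ x :: R) ->
  exists u1 u2, [/\ subseq u1 L, subseq u2 R & u = u1 ++ u2 \/ u = u1 ++ x :: u2].
Proof.
case/subseqP => m; rewrite size_cat => size_m ->.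
have size_take : size (take (size L) m) = size L by rewrite size_takel // size_m leq_addr.
rewrite -[m](cat_take_drop (size L)) mask_cat //.
exists (mask (take (size L) m) L); case: (drop _ m) => [|[] m2] /=.
- by exists [::]; rewrite sub0seq mask_subseq cats0; split => //; left.
- by exists (mask m2 R); rewrite !mask_subseq; split => //; right.
- by exists (mask m2 R); rewrite !mask_subseq; split => //; left.
Qed.

End Occurrences.

Definition pat21 (u : seq nat) := if u is [:: a; b] then b < a else false.
Definition pat132 (u : seq nat) := if u is [:: a; b; c] then a < c < b else false.
Definition pat213 (u : seq nat) := if u is [:: a; b; c] then b < a < c else false.
Definition pat321 (u : seq nat) := if u is [:: a; b; c] then c < b < a else false.
Definition pat3214 (u : seq nat) :=
  if u is [:: a; b; c; d] then [&& c < b, b < a & a < d] else false.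
Definition pat4213 (u : seq nat) :=
  if u is [:: a; b; c; d] then [&& c < b, b < d & d < a] else false.

Lemma avoid_subseq (pat : pred (seq nat)) s1 s2 :
  subseq s1 s2 -> ~~ occurs pat s2 -> ~~ occurs pat s1.
Proof. by move=> s12; apply: contra; apply: occurs_subseq. Qed.

Lemma sorted_avoid (pat : pred (seq nat)) s :
  (forall u, pat u -> ~~ sorted ltn u) -> sorted ltn s -> ~~ occurs pat s.
Proof.
move=> pat_unsorted s_sorted; apply/occursP => -[u u_s].
by move/pat_unsorted/negP; apply; exact: (subseq_sorted ltn_trans u_s s_sorted).
Qed.

Lemma iota_avoid21 i n : ~~ occurs pat21 (iota i n).
Proof.
apply: sorted_avoid (iota_ltn_sorted i n) => -[|a [|b []]] //=.
by rewrite andbT -leqNgt => /ltnW.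
Qed.

Lemma iota_avoid132 i n : ~~ occurs pat132 (iota i n).
Proof. by apply: sorted_avoid (iota_ltn_sorted i n) => -[|a [|b [|c []]]] //=; lia. Qed.

Lemma avoid21_sorted s : uniq s -> ~~ occurs pat21 s -> sorted ltn s.
Proof.
rewrite (sorted_pairwise ltn_trans).
elim: s => [|a s IHs] //= /andP[a_notin_s s_uniq] a_s_avoid.
rewrite IHs //; last by apply: contra a_s_avoid; apply: occurs_subseq (subseq_cons s a).
rewrite andbT; apply/allP => y y_s.
have a_neq_y : a != y by apply: contraNneq a_notin_s => ->.
have : ~~ pat21 [:: a; y].
  apply: contra a_s_avoid => desc; apply/occursP; exists [:: a; y] => //=.
  by rewrite eqxx sub1seq.
by rewrite /= -leqNgt leq_eqVlt (negPf a_neq_y).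
Qed.

Lemma avoid21_perm_iota s i n : perm_eq s (iota i n) -> ~~ occurs pat21 s -> s = iota i n.
Proof.
move=> s_perm s_avoid; apply: (irr_sorted_eq ltn_trans ltnn) (iota_ltn_sorted i n) _.
  by apply: avoid21_sorted s_avoid; rewrite (perm_uniq s_perm) iota_uniq.
exact: perm_mem.
Qed.

Lemma avoid_extend_right (pat pat' : pred (seq nat)) (P : pred nat) y L s :
    (forall u, all P u -> pat u -> pat' (u ++ [:: y])) -> all P L ->
  subseq (L ++ [:: y]) s -> ~~ occurs pat' s -> ~~ occurs pat L.
Proof.
move=> extend PL sub; apply: contra => /occursP[u u_L pat_u]; apply/occursP.
exists (u ++ [:: y]); last exact: extend (subseq_all u_L PL) pat_u.
by apply: subseq_trans sub; rewrite subseq_cat2r.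
Qed.

Lemma avoid_extend_left (pat pat' : pred (seq nat)) (P : pred nat) y R s :
    (forall u, all P u -> pat u -> pat' (y :: u)) -> all P R ->
  subseq (y :: R) s -> ~~ occurs pat' s -> ~~ occurs pat R.
Proof.
move=> extend PR sub; apply: contra => /occursP[u u_R pat_u]; apply/occursP.
exists (y :: u); last exact: extend (subseq_all u_R PR) pat_u.
by apply: subseq_trans sub; rewrite /= eqxx.
Qed.

Lemma perm_iota_all s i n : perm_eq s (iota i n) -> all (fun y => i <= y < i + n) s.
Proof. by move=> perm_s; apply/allP => y; rewrite (perm_mem perm_s) mem_iota. Qed.

Lemma perm_iota_notin s i n x : perm_eq s (iota i n) -> i + n <= x -> x \notin s.
Proof. by move=> perm_s; rewrite (perm_mem perm_s) mem_iota; lia. Qed.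

Lemma perm_pivot_iota (L R : seq nat) i n :
  perm_eq (L ++ i + n :: R) (iota i n.+1) = perm_eq (L ++ R) (iota i n).
Proof.
rewrite -cat1s (perm_catCA L [:: i + n] R) -addn1 iotaD perm_sym perm_catC /=.
by rewrite perm_cons perm_sym.
Qed.

Lemma perm_iota_cat_split (L R : seq nat) i n :
    perm_eq (L ++ R) (iota i n) -> {in L & R, forall u v, v < u} ->
  perm_eq L (iota (i + size R) (n - size R)) /\ perm_eq R (iota i (size R)).
Proof.
move=> permLR R_below_L.
have uniqLR : uniq (L ++ R) by rewrite (perm_uniq permLR) iota_uniq.
have memLR w : (w \in L ++ R) = (i <= w < i + n) by rewrite (perm_mem permLR) mem_iota.
have size_R : size R <= n by rewrite -(size_iota i n) -(perm_size permLR) size_cat leq_addl.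
have R_sub : {subset R <= iota i (size R)}.
  move=> v v_R; have := memLR v; rewrite mem_cat v_R orbT mem_iota => /esym/andP[-> _] /=.
  rewrite ltnNge; apply/negP => v_big.
  suff : {subset iota i (size R).+1 <= R}.
    by move/(uniq_leq_size (iota_uniq _ _)); rewrite size_iota ltnn.
  move=> w; rewrite mem_iota => /andP[i_w w_small].
  have : w \in L ++ R by rewrite memLR i_w /=; have := memLR v; rewrite mem_cat v_R orbT; lia.
  by rewrite mem_cat => /orP[w_L | //]; have := R_below_L w v w_L v_R; lia.
have uniqR : uniq R by move: uniqLR; rewrite cat_uniq => /and3P[].
have permR : perm_eq R (iota i (size R)).
  apply: uniq_perm; rewrite ?iota_uniq //.
  by have [] := uniq_min_size uniqR R_sub; rewrite ?size_iota.
split=> //; rewrite -(perm_cat2r R); apply: (perm_trans permLR).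
by rewrite -{1}(subnKC size_R) iotaD perm_catC perm_cat2l perm_sym.
Qed.

Lemma avoid132_split i n s : perm_eq s (iota i n.+1) -> ~~ occurs pat132 s ->
  exists L R, [/\ s = L ++ i + n :: R, size R <= n,
    perm_eq L (iota (i + size R) (n - size R)) & perm_eq R (iota i (size R))].
Proof.
move=> perm_s avoid_s; have max_s : i + n \in s by rewrite (perm_mem perm_s) mem_iota; lia.
move: perm_s avoid_s; case/splitPr: max_s => L R; rewrite perm_pivot_iota => permLR avoid_s.
have uniqLR : uniq (L ++ R) by rewrite (perm_uniq permLR) iota_uniq.
have R_below_L : {in L & R, forall u v, v < u}.
  move=> u v u_L v_R; have v_max : v < i + n.
    by have := perm_mem permLR v; rewrite mem_cat v_R orbT mem_iota => /esym; lia.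
  have u_neq_v : u != v.
    move: uniqLR; rewrite cat_uniq => /and3P[_ /hasPn/(_ v v_R) v_notin_L _].
    by apply: contraNneq v_notin_L => <-.
  have : ~~ pat132 [:: u; i + n; v].
    apply: contra avoid_s => pat_uxv; apply/occursP; exists [:: u; i + n; v] => //.
    by rewrite -cat1s cat_subseq ?sub1seq //= eqxx sub1seq.
  by rewrite /= v_max andbT -leqNgt leq_eqVlt eq_sym (negPf u_neq_v).
have [permL permR] := perm_iota_cat_split permLR R_below_L.
exists L, R; split=> //.
by rewrite -(size_iota i n) -(perm_size permLR) size_cat leq_addl.
Qed.

(* An occurrence in [L ++ x :: R] is a part in [L], possibly [x], and a part
   in [R].  For patterns of length at most 4 each such shape is refuted either
   by the value bounds on [L] and [R] or by an occurrence of a shorter pattern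
   in [L] or [R] that an avoidance hypothesis in the context excludes. *)
Ltac refute_pivot_occurrence boundL boundR :=
  let u := fresh "u" in let u1 := fresh "u1" in let u2 := fresh "u2" in
  let sub1 := fresh "sub1" in let sub2 := fresh "sub2" in let u_eq := fresh "u_eq" in
  apply/occursP => -[u /subseq_pivot[u1 [u2 [sub1 sub2 u_eq]]]];
  move: (subseq_all sub1 boundL) (subseq_all sub2 boundR);
  case: u_eq => -> {u};
  case: u1 sub1 => [|? [|? [|? [|? [|? ?]]]]] sub1;
  case: u2 sub2 => [|? [|? [|? [|? [|? ?]]]]] sub2 //= ? ? ?;
  first [ lia
        | match goal with
          | sub : is_true (subseq ?v ?S), avoid : is_true (~~ occurs _ ?S) |- _ =>
              case/negP: avoid; apply: occurs_subseq sub _; rewrite /occurs /=; lia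
          end ].

Section Glue.
Variables (i k r : nat) (L R : seq nat).
Hypotheses (r_le_k : r <= k) (permL : perm_eq L (iota (i + r) (k - r)))
  (permR : perm_eq R (iota i r)).

Lemma perm_glue : perm_eq (L ++ i + k :: R) (iota i k.+1).
Proof. by rewrite perm_pivot_iota -(subnKC r_le_k) iotaD perm_catC; apply: perm_cat. Qed.

Let L_mid : all (fun y => i + r <= y < i + k) L.
Proof. by apply/allP => y; rewrite (perm_mem permL) mem_iota; lia. Qed.

Let R_low : all (fun y => y < i + r) R.
Proof. by apply/allP => y; rewrite (perm_mem permR) mem_iota; lia. Qed.

Lemma glue_avoid132 :
  ~~ occurs pat132 L -> ~~ occurs pat132 R -> ~~ occurs pat132 (L ++ i + k :: R).
Proof. by move=> avoidL avoidR; refute_pivot_occurrence L_mid R_low. Qed.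

Lemma glue_avoid213 :
  ~~ occurs pat21 L -> ~~ occurs pat213 R -> ~~ occurs pat213 (L ++ i + k :: R).
Proof. by move=> avoidL avoidR; refute_pivot_occurrence L_mid R_low. Qed.

Lemma glue_avoid321 :
  ~~ occurs pat21 L -> ~~ occurs pat21 R -> ~~ occurs pat321 (L ++ i + k :: R).
Proof. by move=> avoidL avoidR; refute_pivot_occurrence L_mid R_low. Qed.

Lemma glue_avoid3214 :
  ~~ occurs pat321 L -> ~~ occurs pat213 R -> ~~ occurs pat3214 (L ++ i + k :: R).
Proof. by move=> avoidL avoidR; refute_pivot_occurrence L_mid R_low. Qed.

Lemma glue_avoid4213 :
  ~~ occurs pat321 L -> ~~ occurs pat213 R -> ~~ occurs pat4213 (L ++ i + k :: R).
Proof. by move=> avoidL avoidR; refute_pivot_occurrence L_mid R_low. Qed.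

End Glue.

Lemma avoid321_append_max L x :
  all (fun y => y < x) L -> ~~ occurs pat321 L -> ~~ occurs pat321 (L ++ [:: x]).
Proof.
have R_low : all (fun y => y < 0) [::] by [].
by move=> L_low avoidL; refute_pivot_occurrence L_low R_low.
Qed.

(* In every use, [x] is the maximum and [t] a word of the [r] smallest values. *)
Definition pivot_words (x k : nat) (Ls Rs : nat -> seq (seq nat)) : seq (seq nat) :=
  [seq w | r <- iota 0 k.+1, w <- [seq l ++ x :: t | l <- Ls r, t <- Rs r]].

Section PivotWords.
Variables (x k : nat) (Ls Rs : nat -> seq (seq nat)).

Lemma pivot_wordsP s : s \in pivot_words x k Ls Rs ->
  exists r l t, [/\ r <= k, l \in Ls r, t \in Rs r & s = l ++ x :: t].
Proof.
case/allpairsPdep => r [w [r_k /allpairsP[[l t] [/= l_Ls t_Rs ->]] ->]].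
by exists r, l, t; move: r_k; rewrite mem_iota ltnS.
Qed.

Lemma mem_pivot_words r l t : r <= k -> l \in Ls r -> t \in Rs r ->
  l ++ x :: t \in pivot_words x k Ls Rs.
Proof.
move=> r_k l_Ls t_Rs; apply/allpairsPdep; exists r, (l ++ x :: t).
by rewrite mem_iota ltnS r_k; split=> //; apply: allpairs_f.
Qed.

Lemma eq_in_pivot_words Rs' : (forall r, r <= k -> Rs r = Rs' r) ->
  pivot_words x k Ls Rs = pivot_words x k Ls Rs'.
Proof.
move=> eq_Rs; congr flatten; apply/eq_in_map => r.
by rewrite mem_iota ltnS => /andP[_ r_k]; rewrite eq_Rs.
Qed.

Lemma size_pivot_words :
  size (pivot_words x k Ls Rs) = \sum_(r < k.+1) size (Ls r) * size (Rs r).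
Proof.
rewrite size_allpairs_dep sumnE big_map -[iota 0 k.+1]/(index_iota 0 k.+1) big_mkord.
by apply: eq_bigr => r _; rewrite size_allpairs.
Qed.

Lemma uniq_pivot_words :
    (forall r, r <= k -> uniq (Ls r) /\ uniq (Rs r)) ->
    (forall r l, r <= k -> l \in Ls r -> x \notin l) ->
    (forall r t, r <= k -> t \in Rs r -> size t = r) ->
  uniq (pivot_words x k Ls Rs).
Proof.
move=> uniq_parts x_notin_Ls size_Rs.
have glue_inj r1 r2 l1 l2 t1 t2 : r1 <= k -> r2 <= k -> l1 \in Ls r1 -> l2 \in Ls r2 ->
    l1 ++ x :: t1 = l2 ++ x :: t2 -> l1 = l2 /\ t1 = t2.
  move=> r1_k r2_k l1_Ls l2_Ls /eqP.
  rewrite eqseq_pivot2l ?(x_notin_Ls r1 l1) ?(x_notin_Ls r2 l2) //.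
  by case/andP => /eqP-> /eqP->.
apply: allpairs_uniq_dep => [|r|]; first exact: iota_uniq.
  rewrite mem_iota ltnS => r_k; have [uniq_Ls uniq_Rs] := uniq_parts r r_k.
  apply: allpairs_uniq => // -[l1 t1] [l2 t2].
  move=> /allpairsP[[? ?] [/= l1_Ls _ [-> ->]]] /allpairsP[[? ?] [/= l2_Ls _ [-> ->]]] /=.
  by case/(glue_inj r r) => // -> ->.
move=> _ _ /allpairsPdep[r1 [w1 [r1_k w1_in ->]]] /allpairsPdep[r2 [w2 [r2_k w2_in ->]]] /=.
move=> eq_w; rewrite -{}eq_w in w2_in *.
case/allpairsP: w1_in => -[l1 t1] [/= l1_Ls t1_Rs w1_eq].
case/allpairsP: w2_in => -[l2 t2] [/= l2_Ls t2_Rs w2_eq].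
move: r1_k r2_k; rewrite !mem_iota !ltnS => /andP[_ r1_k] /andP[_ r2_k].
rewrite w1_eq in w2_eq; have [_ eq_t] := glue_inj _ _ _ _ _ _ r1_k r2_k l1_Ls l2_Ls w2_eq.
by rewrite -(size_Rs r1 t1) // -(size_Rs r2 t2) // eq_t.
Qed.

End PivotWords.

Fixpoint av132_321 (i k : nat) : seq (seq nat) :=
  if k is k'.+1 then
    pivot_words (i + k') k'
      (fun r => if r is 0 then av132_321 i k' else [:: iota (i + r) (k' - r)])
      (fun r => [:: iota i r])
  else [:: [::]].

Lemma mem_av132_321 i k s : (s \in av132_321 i k) =
  [&& perm_eq s (iota i k), ~~ occurs pat132 s & ~~ occurs pat321 s].
Proof.
elim: k s => [|k IHk] s.
  by apply/idP/and3P => [|[/perm_nilP -> //]]; rewrite inE => /eqP ->.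
apply/idP/and3P => [/pivot_wordsP[r [l [t [r_k l_in]]]] | [perm_s avoid132 avoid321]].
  rewrite inE => /eqP -> ->; have perm_t := perm_refl (iota i r).
  case: r r_k l_in perm_t => [|r] r_k l_in perm_t; last first.
    move: (l_in : l \in [:: _]); rewrite inE => /eqP ->.
    have perm_l := perm_refl (iota (i + r.+1) (k - r.+1)).
    split; first exact: perm_glue r_k perm_l perm_t.
      by rewrite (glue_avoid132 r_k perm_l perm_t) ?iota_avoid132.
    by rewrite (glue_avoid321 r_k perm_l perm_t) ?iota_avoid21.
  move: l_in; rewrite IHk => /and3P[perm_l l132 l321].
  have perm_l0 : perm_eq l (iota (i + 0) (k - 0)) by rewrite addn0 subn0.
  split; first exact: perm_glue perm_l0 perm_t.
    by rewrite (glue_avoid132 r_k perm_l0 perm_t).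
  by apply: avoid321_append_max l321; apply: sub_all (perm_iota_all perm_l) => y /andP[_ ->].
have [L [R [s_eq R_k permL permR]]] := avoid132_split perm_s avoid132; subst s; clear perm_s.
have avoid21R : ~~ occurs pat21 R.
  apply: (avoid_extend_left (P := fun y => y < i + k) (y := i + k)) avoid321.
  - by case=> [|a [|b []]] //=; lia.
  - by apply: sub_all (perm_iota_all permR) => y /andP[_]; lia.
  - exact: suffix_subseq.
apply: (mem_pivot_words _ R_k); last by rewrite inE -(avoid21_perm_iota permR avoid21R).
case: R R_k permL permR avoid132 avoid321 {avoid21R} => [|r0 R] R_k permL permR
  avoid132 avoid321 /=.
  rewrite addn0 subn0 in permL; rewrite IHk permL; have sub_L := prefix_subseq L [:: i + k].
  by rewrite (avoid_subseq sub_L avoid132) (avoid_subseq sub_L avoid321).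
rewrite inE (avoid21_perm_iota permL) ?eqxx //.
apply: (avoid_extend_right (P := fun y => r0 < y) (y := r0)) avoid321.
- by case=> [|a [|b []]] //=; lia.
- have : r0 \in iota i (size R).+1 by rewrite -(perm_mem permR) mem_head.
  rewrite mem_iota => r0_low; apply: sub_all (perm_iota_all permL) => y /andP[+ _].
  by rewrite [size _]/=; lia.
- by rewrite subseq_cat2l sub1seq !inE eqxx orbT.
Qed.

(* The fuel only makes the recursion on the shorter lengths [r <= m'] structural. *)
Fixpoint av132_213_fuel (fuel m : nat) : seq (seq nat) :=
  match fuel, m with
  | _, 0 => [:: [::]]
  | 0, _.+1 => [::]
  | fuel'.+1, m'.+1 =>
      pivot_words m' m' (fun r => [:: iota r (m' - r)]) (av132_213_fuel fuel')
  end.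

Definition av132_213 (m : nat) : seq (seq nat) := av132_213_fuel m m.

Lemma av132_213_fuel_stable f1 f2 m :
  m <= f1 -> m <= f2 -> av132_213_fuel f1 m = av132_213_fuel f2 m.
Proof.
elim: f1 f2 m => [|f1 IHf] [|f2] [|m] //= m_f1 m_f2.
by apply: eq_in_pivot_words => r r_m; apply: IHf; lia.
Qed.

Lemma av132_213S m :
  av132_213 m.+1 = pivot_words m m (fun r => [:: iota r (m - r)]) av132_213.
Proof. by apply: eq_in_pivot_words => r r_m; apply: av132_213_fuel_stable. Qed.

Lemma mem_av132_213 m s : (s \in av132_213 m) =
  [&& perm_eq s (iota 0 m), ~~ occurs pat132 s & ~~ occurs pat213 s].
Proof.
elim/ltn_ind: m s => -[_ | m IHm] s.
  by apply/idP/and3P => [|[/perm_nilP -> //]]; rewrite inE => /eqP ->.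
rewrite av132_213S.
apply/idP/and3P => [/pivot_wordsP[r [l [t [r_k]]]] | [perm_s avoid132 avoid213]].
  rewrite inE IHm ?ltnS // => /eqP -> /and3P[perm_t t132 t213] ->.
  have perm_l := perm_refl (iota (0 + r) (m - r)).
  split; first exact: perm_glue r_k perm_l perm_t.
    by rewrite (glue_avoid132 r_k perm_l perm_t) ?iota_avoid132.
  by rewrite (glue_avoid213 r_k perm_l perm_t) ?iota_avoid21.
have [L [R [s_eq R_k permL permR]]] := avoid132_split perm_s avoid132; subst s.
apply: (mem_pivot_words _ R_k).
  rewrite inE (avoid21_perm_iota permL) ?eqxx //.
  apply: (avoid_extend_right (P := fun y => y < m) (y := m)) avoid213.
  - by case=> [|a [|b []]] //=; lia.
  - by apply: sub_all (perm_iota_all permL) => y /andP[_]; lia.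
  - by rewrite subseq_cat2l sub1seq mem_head.
have sub_R := pivot_suffix_subseq L R (0 + m).
by rewrite IHm ?ltnS // permR (avoid_subseq sub_R avoid132) (avoid_subseq sub_R avoid213).
Qed.

Definition av132_3214_4213 (n : nat) : seq (seq nat) :=
  if n is m.+1 then pivot_words m m (fun r => av132_321 r (m - r)) av132_213
  else [:: [::]].

Lemma mem_av132_3214_4213 n s : (s \in av132_3214_4213 n) =
  [&& perm_eq s (iota 0 n), ~~ occurs pat132 s, ~~ occurs pat3214 s
    & ~~ occurs pat4213 s].
Proof.
case: n => [|m].
  by apply/idP/and4P => [|[/perm_nilP -> //]]; rewrite inE => /eqP ->.
apply/idP/and4P => [/pivot_wordsP[r [l [t [r_k]]]] | [perm_s avoid132 avoid3214 avoid4213]].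
  rewrite mem_av132_321 mem_av132_213 => /and3P[perm_l l132 l321] /and3P[perm_t t132 t213] ->.
  rewrite -[r]add0n in perm_l; split; first exact: perm_glue r_k perm_l perm_t.
  - exact: glue_avoid132 r_k perm_l perm_t l132 t132.
  - exact: glue_avoid3214 r_k perm_l perm_t l321 t213.
  - exact: glue_avoid4213 r_k perm_l perm_t l321 t213.
have [L [R [s_eq R_k permL permR]]] := avoid132_split perm_s avoid132; subst s.
apply: (mem_pivot_words _ R_k).
  rewrite mem_av132_321 -[size R]add0n permL (avoid_subseq (prefix_subseq _ _) avoid132) /=.
  apply: (avoid_extend_right (P := fun y => y < m) (y := m)) avoid3214.
  - by case=> [|a [|b [|c []]]] //=; lia.
  - by apply: sub_all (perm_iota_all permL) => y /andP[_]; lia.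
  - by rewrite subseq_cat2l sub1seq mem_head.
rewrite mem_av132_213 permR (avoid_subseq (pivot_suffix_subseq _ _ _) avoid132) /=.
apply: (avoid_extend_left (P := fun y => y < m) (y := m)) avoid4213.
- by case=> [|a [|b [|c []]]] //=; lia.
- by apply: sub_all (perm_iota_all permR) => y /andP[_]; lia.
- exact: suffix_subseq.
Qed.

Lemma uniq_av132_321 i k : uniq (av132_321 i k).
Proof.
elim: k => [|k IHk] //=; apply: uniq_pivot_words => [[|r] | [|r] l r_k | r t r_k] //=.
- by rewrite mem_av132_321 => /and3P[perm_l _ _]; apply: perm_iota_notin perm_l _.
- by rewrite inE => /eqP ->; apply: perm_iota_notin (perm_refl _) _; lia.
- by rewrite inE => /eqP ->; rewrite size_iota.
Qed.

Lemma uniq_av132_213 m : uniq (av132_213 m).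
Proof.
elim/ltn_ind: m => -[|m] IHm //; rewrite av132_213S.
apply: uniq_pivot_words => [r r_m | r l r_m | r t r_m]; first by rewrite IHm.
- by rewrite inE => /eqP ->; apply: perm_iota_notin (perm_refl _) _; lia.
- by rewrite mem_av132_213 => /and3P[/perm_size ->]; rewrite size_iota.
Qed.

Lemma uniq_av132_3214_4213 n : uniq (av132_3214_4213 n).
Proof.
case: n => [|m] //; apply: uniq_pivot_words => [r r_m | r l r_m | r t r_m].
- by rewrite uniq_av132_321 uniq_av132_213.
- by rewrite mem_av132_321 => /and3P[perm_l _ _]; apply: perm_iota_notin perm_l _; lia.
- by rewrite mem_av132_213 => /and3P[/perm_size ->]; rewrite size_iota.
Qed.

Lemma size_av132_321 i k : size (av132_321 i k) = 'C(k, 2).+1.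
Proof.
elim: k => [|k IHk] //=; rewrite size_pivot_words big_ord_recl /= IHk muln1.
rewrite (eq_bigr (fun _ => 1)) => [|r _]; last by rewrite muln1.
by rewrite sum1_card card_ord binS bin1; lia.
Qed.

Lemma size_av132_213 m : size (av132_213 m) = 2 ^ m.-1.
Proof.
elim/ltn_ind: m => -[|m] IHm //; rewrite av132_213S size_pivot_words /=.
rewrite (eq_bigr (fun r : 'I_m.+1 => 2 ^ r.-1)) => [|r _]; last by rewrite mul1n IHm.
elim: m {IHm} => [|m IHm]; first by rewrite big_ord1.
by rewrite big_ord_recr /= IHm expnS mul2n addnn.
Qed.

Lemma sum_bin2_pow2 n :
  \sum_(r < n.+1) 'C(n - r, 2).+1 * 2 ^ r + n + 'C(n.+1, 2) + 3 = 2 ^ n.+2.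
Proof.
elim: n => [|n IHn]; first by rewrite big_ord1.
rewrite big_ord_recl subn0 expn0 muln1.
under eq_bigr => r _ do rewrite /bump /= subSS expnS mulnCA.
rewrite -big_distrr /= [in RHS]expnS -IHn !binS !bin1 bin0.
by set S := \sum_(_ < n.+1) _; lia.
Qed.

Lemma size_av132_3214_4213 n : size (av132_3214_4213 n) = 2 ^ n - n.
Proof.
case: n => [|[|n]] //; rewrite /= size_pivot_words big_ord_recl.
under eq_bigr => r _ do rewrite /bump /= subSS size_av132_321 size_av132_213.
rewrite size_av132_321 size_av132_213 subn0 muln1.
have := sum_bin2_pow2 n; set S := \sum_(_ < n.+1) _; rewrite expnS; lia.
Qed.

Lemma ltn_ord_trans n : transitive (relpre (@nat_of_ord n) ltn).
Proof. by move=> j i k; apply: ltn_trans. Qed.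

Lemma sorted_enum_ord n : sorted (relpre (@nat_of_ord n) ltn) (enum 'I_n).
Proof. by rewrite -sorted_map val_enum_ord iota_ltn_sorted. Qed.

Definition same_order (u p : seq nat) : Prop :=
  size u = size p /\
  forall a b : 'I_(size p), (nth 0 u a < nth 0 u b) = (nth 0 p a < nth 0 p b).

Section Words.
Variable n : nat.

Lemma sorted_ord_subseq (t : seq 'I_n) :
  sorted (relpre (@nat_of_ord n) ltn) t -> subseq t (enum 'I_n).
Proof.
move=> t_sorted; apply/subseq_uniqP; first exact: enum_uniq.
apply: (irr_sorted_eq (@ltn_ord_trans n)) => //.
- by move=> i; apply: ltnn.
- by apply: sorted_filter; [apply: ltn_ord_trans | apply: sorted_enum_ord].
- by move=> i; rewrite mem_filter mem_enum andbT.
Qed.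

Definition word (tau : 'S_n) : seq nat := [seq val (tau i) | i <- enum 'I_n].

Lemma contains_patternP (tau : 'S_n) p :
  reflect (exists2 u, subseq u (word tau) & same_order u p) (contains_pattern tau p).
Proof.
apply: (iffP existsP) => [[f /forallP f_ok] | [u]].
  have f_incr (a b : 'I_(size p)) : a < b -> f a < f b.
    by move: (f_ok a) => /forallP/(_ b)/andP[/implyP].
  exists [seq val (tau (f a)) | a <- enum 'I_(size p)].
    rewrite (map_comp (fun i => val (tau i)) f); apply: map_subseq; apply: sorted_ord_subseq.
    by apply: homo_sorted (sorted_enum_ord _) => a b; apply: f_incr.
  split=> [|a b]; first by rewrite size_map size_enum_ord.
  rewrite !(nth_map a 0 _ (s := enum 'I_(size p))) ?size_enum_ord // !nth_ord_enum.
  by move: (f_ok a) => /forallP/(_ b)/andP[_ /eqP].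
case/subseqP => m _ u_eq; pose t : seq 'I_n := mask m (enum 'I_n).
have {u_eq}-> : u = [seq val (tau i) | i <- t] by rewrite u_eq map_mask.
case; rewrite size_map => size_t cmp.
have t_sorted : sorted (relpre (@nat_of_ord n) ltn) t.
  exact (subseq_sorted (@ltn_ord_trans n) (mask_subseq m (enum 'I_n)) (sorted_enum_ord n)).
pose tt := Tuple (introT eqP size_t).
exists [ffun a => tnth tt a]; apply/forallP => a; apply/forallP => b.
have x0 := tnth tt a; rewrite !ffunE !(tnth_nth x0); apply/andP; split.
  apply/implyP => a_lt_b; apply: (sorted_ltn_nth (@ltn_ord_trans n)) => //.
    by rewrite inE size_t.
  by rewrite inE size_t.
by rewrite -cmp !(nth_map x0) ?size_t.
Qed.

Lemma perm_word (tau : 'S_n) : perm_eq (word tau) (iota 0 n).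
Proof.
rewrite /word -val_enum_ord (map_comp val tau); apply: perm_map.
apply: uniq_perm => [||i]; first by rewrite (map_inj_uniq (@perm_inj _ tau)) enum_uniq.
  exact: enum_uniq.
by rewrite mem_enum; apply/mapP; exists (tau^-1 i)%g; rewrite ?mem_enum ?permKV.
Qed.

Lemma word_inj : injective word.
Proof.
move=> sigma tau eq_words; apply/permP => i; apply: val_inj.
have := congr1 (nth 0 ^~ i) eq_words.
by rewrite !(nth_map i 0 _ (s := enum 'I_n)) ?size_enum_ord // nth_ord_enum.
Qed.

Lemma word_surj s : perm_eq s (iota 0 n) -> exists tau : 'S_n, word tau = s.
Proof.
move=> perm_s; have size_s : size s = n by rewrite (perm_size perm_s) size_iota.
have s_lt (i : 'I_n) : nth 0 s i < n.
  have : nth 0 s i \in s by rewrite mem_nth ?size_s.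
  by rewrite (perm_mem perm_s) mem_iota.
have f_inj : injective (fun i => Ordinal (s_lt i)).
  move=> i j /(congr1 val) /= /eqP.
  rewrite nth_uniq ?size_s ?(perm_uniq perm_s) ?iota_uniq //.
  by move/eqP/val_inj.
exists (perm f_inj); apply: (@eq_from_nth _ 0); first by rewrite size_map size_enum_ord.
move=> i; rewrite size_map size_enum_ord => lt_i.
rewrite (nth_map (Ordinal lt_i) 0 _ (s := enum 'I_n)) ?size_enum_ord //.
by rewrite -[i]/(val (Ordinal lt_i)) nth_ord_enum permE.
Qed.

End Words.

Lemma contains_patternE n (tau : 'S_n) p (pat : pred (seq nat)) :
  (forall u, same_order u p <-> pat u) -> contains_pattern tau p = occurs pat (word tau).
Proof.
by move=> patP; apply/contains_patternP/occursP => -[u sub_u /patP]; exists u.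
Qed.

Lemma same_order132 u : same_order u [:: 1; 3; 2] <-> pat132 u.
Proof.
split=> [[] | ].
  case: u => [|a [|b [|c []]]] //= _ cmp.
  have := cmp (@Ordinal 3 0 isT) (@Ordinal 3 2 isT).
  by have := cmp (@Ordinal 3 2 isT) (@Ordinal 3 1 isT) => /=; lia.
case: u => [|a [|b [|c []]]] //= pat_u; split=> //.
by move=> [[|[|[|i]]] lt_i] [[|[|[|j]]] lt_j] //=; lia.
Qed.

Lemma same_order3214 u : same_order u [:: 3; 2; 1; 4] <-> pat3214 u.
Proof.
split=> [[] | ].
  case: u => [|a [|b [|c [|d []]]]] //= _ cmp.
  have := cmp (@Ordinal 4 2 isT) (@Ordinal 4 1 isT).
  have := cmp (@Ordinal 4 1 isT) (@Ordinal 4 0 isT).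
  by have := cmp (@Ordinal 4 0 isT) (@Ordinal 4 3 isT) => /=; lia.
case: u => [|a [|b [|c [|d []]]]] //= pat_u; split=> //.
by move=> [[|[|[|[|i]]]] lt_i] [[|[|[|[|j]]]] lt_j] //=; lia.
Qed.

Lemma same_order4213 u : same_order u [:: 4; 2; 1; 3] <-> pat4213 u.
Proof.
split=> [[] | ].
  case: u => [|a [|b [|c [|d []]]]] //= _ cmp.
  have := cmp (@Ordinal 4 2 isT) (@Ordinal 4 1 isT).
  have := cmp (@Ordinal 4 1 isT) (@Ordinal 4 3 isT).
  by have := cmp (@Ordinal 4 3 isT) (@Ordinal 4 0 isT) => /=; lia.
case: u => [|a [|b [|c [|d []]]]] //= pat_u; split=> //.
by move=> [[|[|[|[|i]]]] lt_i] [[|[|[|[|j]]]] lt_j] //=; lia.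
Qed.

Lemma mem_Av_word n (tau : 'S_n) :
  (tau \in Av n [:: [:: 1; 3; 2]; [:: 3; 2; 1; 4]; [:: 4; 2; 1; 3]]) =
  [&& ~~ occurs pat132 (word tau), ~~ occurs pat3214 (word tau)
    & ~~ occurs pat4213 (word tau)].
Proof.
rewrite inE /= /avoids_pattern andbT (contains_patternE _ same_order132).
by rewrite (contains_patternE _ same_order3214) (contains_patternE _ same_order4213).
Qed.

Theorem mainTheorem3 (n : nat) :
  #|Av n [:: [:: 1; 3; 2]; [:: 3; 2; 1; 4]; [:: 4; 2; 1; 3]]| = 2 ^ n - n.
Proof.
rewrite -size_av132_3214_4213 cardE -(size_map (@word n)); apply/perm_size/uniq_perm.
- by rewrite (map_inj_uniq (@word_inj n)) enum_uniq.
- exact: uniq_av132_3214_4213.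
move=> s; rewrite mem_av132_3214_4213.
apply/mapP/and4P => [[tau] | [perm_s avoid132 avoid3214 avoid4213]].
  by rewrite mem_enum mem_Av_word => /and3P[? ? ?] ->; split=> //; apply: perm_word.
have [tau tau_s] := word_surj perm_s; subst s; exists tau => //.
by rewrite mem_enum mem_Av_word; apply/and3P.
Qed.
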